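(* Let $T$ be a trigraph in $\mathcal F$ that admits no balanced skew-partition and contains no antihole of length six. If $T$ is unfavorable, then either $T$ is complete or $|V(T)|\le 5$.
   Context: A trigraph $T$ consists of a finite set $V(T)$ and a map $\theta:\binom{V(T)}{2}\to\{-1,0,1\}$. Two distinct vertices $u,v$ are strongly adjacent if $\theta(uv)=1$, strongly antiadjacent if $\theta(uv)=-1$, and semiadjacent (a switchable pair) if $\theta(uv)=0$; they are adjacent if $\theta(uv)\in\{0,1\}$ and antiadjacent if $\theta(uv)\in\{0,-1\}$. $N(v)$ is the set of vertices adjacent to $v$. An edge (antiedge) is an adjacent (antiadjacent) pair; a strong edge (strong antiedge) is a strongly adjacent (strongly antiadjacent) pair. A vertex/set is strongly complete (strongly anticomplete, complete, anticomplete) to a disjoint set if every pair between them is strongly adjacent (strongly antiadjacent, adjacent, antiadjacent). The complement $\overline T$ has vertex set $V(T)$ and adjacency function $-\theta$. For $X\subseteq V(T)$, $T|X$ is the trigraph on $X$ with $\theta$ restricted, and $T\setminus X=T|(V(T)\setminus X)$; $T$ contains $H$ if $H$ is isomorphic to some $T|X$. A clique (strong clique) is a set of pairwise adjacent (strongly adjacent) vertices; a stable set (strongly stable set) is a set of pairwise antiadjacent (strongly antiadjacent) vertices; $T$ is complete if $V(T)$ is a clique. $T$ is a graph if it has no switchable pair. A realization of $T$ is a graph on $V(T)$ in which every strong edge is an edge and every strong antiedge is a non-edge; the full realization is the realization in which all switchable pairs are edges. A set $X$ is connected if the full realization of $T|X$ is connected, and anticonnected if the graph on $X$ whose edges are the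 antiadjacent pairs of $T|X$ is connected; components (anticomponents) are maximal connected (anticonnected) subsets. A path is a sequence of distinct vertices $p_1,\dots,p_k$ such that $p_i,p_j$ are adjacent when $|i-j|=1$ and antiadjacent when $|i-j|>1$; its length is $k-1$, and it is even or odd according to its length. An antipath is an induced subtrigraph whose complement is a path of $\overline T$. A hole of length $k\ge5$ consists of vertices $h_1,\dots,h_k$ with $h_i,h_j$ adjacent if $|i-j|\in\{1,k-1\}$ and antiadjacent otherwise; an antihole is an induced subtrigraph whose complement is a hole of $\overline T$ (length = number of vertices). $T$ is Berge if it contains no hole of odd length and no antihole of odd length. An even pair of $T$ is a strongly antiadjacent pair $\{u,v\}$ such that every path from $u$ to $v$ in $T$ has even length. $\Sigma(T)$ is the graph on $V(T)$ whose edges are the switchable pairs of $T$; a switchable component is a connected component of $\Sigma(T)$ with at least two vertices. $\mathcal F$ is the class of Berge trigraphs $T$ such that: (1) $T$ has at most one switchable component, and it has at most two edges; (2) if the switchable component has exactly one edge $xy$, then $N(x)\cap N(y)=\emptyset$ (it is called small); (3) if it has two edges, with $v$ the vertex of degree two in $\Sigma(T)$ and $x,y$ its neighbours, then $v$ is strongly anticomplete to $V(T)\setminus\{v,x,y\}$, $x$ is strongly antiadjacent to $y$, and $N(x)\cap N(y)=\{v\}$ (it is called light). For $T\in\mathcal F$, $D$ denotes the vertex set of its switchable component ($D=\emptyset$ if $T$ has no switchable pair). A pair $\{u,v\}$ is disjoint from the switchable component if $\{u,v\}\cap D=\emptyset$. A trigraph $T\in\mathcal F$ is favorable if (1) $|V(T)|\ge5$;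 (2) $T$ has a strongly antiadjacent pair $\{u,v\}$ disjoint from $D$; and (3) if $D=\{x,y\}$ is small, then at least one of $V(T)\setminus(D\cup N(x))$, $V(T)\setminus(D\cup N(y))$ is not a clique. It is unfavorable otherwise. A skew-partition of $T$ is a partition $(A,B)$ of $V(T)$ with $A$ not connected and $B$ not anticonnected; it is balanced if there is no odd path of length greater than one with both ends in $B$ and interior in $A$, and no odd antipath of length greater than one with both ends in $A$ and interior in $B$. *)

From HB Require Import structures.
From mathcomp Require Import all_boot.

Set Implicit Arguments.
Unset Strict Implicit.
Unset Printing Implicit Defensive.

(* Values of the adjacency function theta : 1, 0, -1. *)
Inductive tri := TStrongAdj | TSemi | TStrongAnti .

(* A trigraph with vertex set V : theta is a symmetric map on pairs;
   its value on the diagonal is irrelevant (never used). *)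
Record trigraph (V : finType) := Trigraph {
  theta : V -> V -> tri;
  theta_sym : forall u v, theta u v = theta v u }.

Section Trigraphs.
Variables (V : finType) (T : trigraph V).

Definition adj (u v : V) : bool :=
  (u != v) && (match theta T u v with TStrongAnti => false | _ => true end).
Definition antiadj (u v : V) : bool :=
  (u != v) && (match theta T u v with TStrongAdj => false | _ => true end).
Definition sadj (u v : V) : bool :=
  (u != v) && (match theta T u v with TStrongAdj => true | _ => false end).
Definition santiadj (u v : V) : bool :=
  (u != v) && (match theta T u v with TStrongAnti => true | _ => false end).
Definition semiadj (u v : V) : bool :=
  (u != v) && (match theta T u v with TSemi => true | _ => false end).

Definition nbhd (v : V) : {set V} := [set u | adj v u].

Definition clique (X : {set V}) : Prop :=
  forall u v, u \in X -> v \in X -> u != v -> adj u v.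
Definition complete : Prop := clique setT.

Definition rel_in (X : {set V}) (r : rel V) : rel V :=
  fun u v => [&& u \in X, v \in X & r u v].

(* X is connected: full realization of T|X is connected (empty set and
   singletons are connected). *)
Definition connected_set (X : {set V}) : Prop :=
  forall u v, u \in X -> v \in X -> connect (rel_in X adj) u v.
Definition anticonnected_set (X : {set V}) : Prop :=
  forall u v, u \in X -> v \in X -> connect (rel_in X antiadj) u v.

Definition path_like (near far : rel V) (p : seq V) : Prop :=
  uniq p /\
  forall i j : 'I_(size p), i < j ->
    if (j : nat) == i.+1 then near (tnth (in_tuple p) i) (tnth (in_tuple p) j)
    else far (tnth (in_tuple p) i) (tnth (in_tuple p) j).

(* path of T (length size p - 1); antipath = path of the complement *)
Definition tpath (p : seq V) : Prop := path_like adj antiadj p.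
Definition tantipath (p : seq V) : Prop := path_like antiadj adj p.

Definition hole_like (near far : rel V) (h : seq V) : Prop :=
  5 <= size h /\ uniq h /\
  forall i j : 'I_(size h), i < j ->
    if (j - i == 1) || (j - i == (size h).-1)
    then near (tnth (in_tuple h) i) (tnth (in_tuple h) j)
    else far (tnth (in_tuple h) i) (tnth (in_tuple h) j).

Definition hole (h : seq V) : Prop := hole_like adj antiadj h.
Definition antihole (h : seq V) : Prop := hole_like antiadj adj h.

Definition Berge : Prop :=
  (forall h, hole h -> ~~ odd (size h)) /\
  (forall h, antihole h -> ~~ odd (size h)).

Definition skew_partition (A : {set V}) : Prop :=
  ~ connected_set A /\ ~ anticonnected_set (~: A).

(* balanced: with B = V \ A; a path x :: q ++ [y] has length size q + 1 *)
Definition balanced (A : {set V}) : Prop :=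
  (forall x y q, tpath (x :: rcons q y) -> x \in ~: A -> y \in ~: A ->
     all (fun z => z \in A) q -> 1 < (size q).+1 -> ~~ odd (size q).+1) /\
  (forall x y q, tantipath (x :: rcons q y) -> x \in A -> y \in A ->
     all (fun z => z \in ~: A) q -> 1 < (size q).+1 -> ~~ odd (size q).+1).

Definition balanced_skew_partition (A : {set V}) : Prop :=
  skew_partition A /\ balanced A.

(* switchable components: components of Sigma(T) with >= 2 vertices *)
Definition swcomp (D : {set V}) : bool :=
  (1 < #|D|) && [exists x, D == [set y | connect semiadj x y]].

Definition swedges (D : {set V}) : {set {set V}} :=
  [set e : {set V} | (e \subset D) &&
     [exists x, exists y, (e == [set x; y]) && semiadj x y]].

Definition swD : {set V} := [set x | [exists D : {set V}, swcomp D && (x \in D)]].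

Definition inF : Prop :=
  Berge /\
  (forall D1 D2, swcomp D1 -> swcomp D2 -> D1 = D2) /\
  (forall D, swcomp D -> #|swedges D| <= 2) /\
  (forall D x y, swcomp D -> #|swedges D| = 1 -> x \in D -> semiadj x y ->
     nbhd x :&: nbhd y = set0) /\
  (forall D v x y, swcomp D -> #|swedges D| = 2 -> v \in D ->
     semiadj v x -> semiadj v y -> x != y ->
     (forall w, w \notin [set v; x; y] -> santiadj v w) /\
     santiadj x y /\ nbhd x :&: nbhd y = [set v]).

Definition favorable : Prop :=
  5 <= #|V| /\
  (exists u v, santiadj u v /\ u \notin swD /\ v \notin swD) /\
  (forall x y, x != y -> swD = [set x; y] ->
     ~ clique (~: (swD :|: nbhd x)) \/ ~ clique (~: (swD :|: nbhd y))).

End Trigraphs.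

(* Assume |V| >= 6.  Two constructions of a balanced skew-partition (A, B)
   drive the proof: A has an isolated vertex and B = V \ A is a strong
   clique (bsp_of_strong_clique), or A is stable and some vertex of B is
   strongly adjacent to the rest of B (bsp_of_stable).
   - If a strongly antiadjacent pair avoids D, unfavorability forces
     D = {x, y} small with the outer non-neighbourhoods of x and y cliques.
     Then V \ D is the union of the cliques X = N(x) \ D and Y = N(y) \ D
     (else a 5-hole), non-edges between X and Y never cross (else a
     6-antihole), so the non-neighbourhoods in Y of the vertices of X are
     nested, and a vertex of X with the largest one yields a balanced
     skew-partition (strong_pair_contra).
   - Otherwise V \ D is a strong clique.  If D is empty T is complete;
     if D is small or light, a vertex of V \ D missing D, a side of D with
     two or with no outer neighbours, or a 5-hole through D gives a
     contradiction (small_clique_contra, light_clique_contra). *)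

From Pilot Require Import Defs.
From HB Require Import structures.
From mathcomp Require Import all_boot zify.
From Stdlib Require Import Classical.

Set Implicit Arguments.
Unset Strict Implicit.
Unset Printing Implicit Defensive.

Section Adjacency.
Variables (V : finType) (T : trigraph V).
Local Notation adj := (adj T).
Local Notation antiadj := (antiadj T).
Local Notation semiadj := (semiadj T).
Local Notation santiadj := (santiadj T).
Local Notation swD := (swD T).

Lemma adjC u v : adj u v = adj v u.
Proof. by rewrite /Defs.adj eq_sym theta_sym. Qed.

Lemma antiadjC u v : antiadj u v = antiadj v u.
Proof. by rewrite /Defs.antiadj eq_sym theta_sym. Qed.

Lemma semiadjC u v : semiadj u v = semiadj v u.
Proof. by rewrite /Defs.semiadj eq_sym theta_sym. Qed.

Lemma adj_neq u v : adj u v -> u != v.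
Proof. by case/andP. Qed.

Lemma antiadj_neq u v : antiadj u v -> u != v.
Proof. by case/andP. Qed.

Lemma semiadj_neq u v : semiadj u v -> u != v.
Proof. by case/andP. Qed.

Lemma adjxx u : adj u u = false.
Proof. by rewrite /Defs.adj eqxx. Qed.

Lemma antiadjxx u : antiadj u u = false.
Proof. by rewrite /Defs.antiadj eqxx. Qed.

Lemma semiadj_adj u v : semiadj u v -> adj u v.
Proof. by rewrite /Defs.semiadj /Defs.adj; case: (theta T u v); rewrite ?andbF. Qed.

Lemma santiadj_antiadj u v : santiadj u v -> antiadj u v.
Proof. by rewrite /Defs.santiadj /Defs.antiadj; case: (theta T u v); rewrite ?andbF. Qed.

Lemma santiadj_nadj u v : santiadj u v -> ~~ adj u v.
Proof. by rewrite /Defs.santiadj /Defs.adj; case: (theta T u v); case: (u != v). Qed.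

Lemma nadj_santiadj u v : u != v -> ~~ adj u v -> santiadj u v.
Proof. by rewrite /Defs.adj /Defs.santiadj => ->; case: (theta T u v). Qed.

Lemma nadj_antiadj u v : u != v -> ~~ adj u v -> antiadj u v.
Proof. by move=> uv /(nadj_santiadj uv); apply: santiadj_antiadj. Qed.

Lemma semiadj_swD u v : semiadj u v -> u \in swD.
Proof.
move=> uv; rewrite inE; apply/existsP; exists [set y | connect semiadj u y].
rewrite inE connect0 andbT /swcomp; apply/andP; split; last by apply/existsP; exists u.
by apply/card_gt1P; exists u, v; rewrite !inE connect0 connect1 // semiadj_neq.
Qed.

Lemma nantiadj_off_swD u v : u \notin swD -> (u != v -> adj u v) -> ~~ antiadj u v.
Proof.
move=> uD; rewrite /Defs.antiadj; have [-> //|uv /(_ isT)] := eqVneq u v.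
rewrite /Defs.adj uv /=; case E: (theta T u v) => //= _.
by case/negP: uD; apply: (@semiadj_swD u v); rewrite /Defs.semiadj uv E.
Qed.

Lemma outer_neq u d : u \notin swD -> d \in swD -> u != d.
Proof. by move=> uD; apply: contraTneq => <-. Qed.

Definition outer_nbhd (c : V) : {set V} := [set r | (r \notin swD) && adj c r].

Lemma in_outer_nbhd c r : (r \in outer_nbhd c) = (r \notin swD) && adj c r.
Proof. exact: in_set. Qed.

Lemma mem_outer_nbhd c r : r \in outer_nbhd c -> r \notin swD /\ adj c r.
Proof. by rewrite in_outer_nbhd => /andP []. Qed.

Definition nonnbrs_in (S : {set V}) (a : V) : {set V} := [set q in S | ~~ adj a q].

Lemma in_nonnbrs_in S a q : (q \in nonnbrs_in S a) = (q \in S) && ~~ adj a q.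
Proof. exact: in_set. Qed.

Lemma outer_cover_card x y : (forall r, r \notin swD -> adj x r || adj y r) ->
  #|~: swD| <= #|outer_nbhd x| + #|outer_nbhd y|.
Proof.
move=> cover; apply: leq_trans (leq_card_setU _ _).1; apply: subset_leq_card.
apply/subsetP => r; rewrite in_setC in_setU !in_outer_nbhd => rD.
by rewrite rD; apply: cover.
Qed.

Lemma compl_card_gt1 (A : {set V}) n : #|A| <= n -> n + 2 <= #|V| -> 1 < #|~: A|.
Proof. by move: (cardsC A); lia. Qed.

Lemma card_set3 (a b c : V) : #|[set a; b; c]| <= 3.
Proof. by apply: leq_trans (leq_card_setU _ _).1 _; rewrite cards2 cards1; case: (_ != _). Qed.

End Adjacency.

Section PathEnds.
Variables (V : finType) (near far : rel V).

Lemma path_like_ends x y q :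
  path_like near far (x :: rcons q y) -> 0 < size q -> far x y.
Proof.
case=> _ P q0.
have s0 : 0 < size (x :: rcons q y) by rewrite /= size_rcons.
have s1 : (size q).+1 < size (x :: rcons q y) by rewrite /= size_rcons.
have := P (Ordinal s0) (Ordinal s1) isT.
by rewrite /= eqSS eqn0Ngt q0 !(tnth_nth x) /= nth_rcons ltnn eqxx.
Qed.

Lemma path_like_interior x y q :
  path_like near far (x :: rcons q y) -> 1 < size q ->
  exists a b, [/\ a \in q, b \in q & near a b].
Proof.
case=> _ P q1.
have s1 : 1 < size (x :: rcons q y) by rewrite /= size_rcons.
have s2 : 2 < size (x :: rcons q y) by rewrite /= size_rcons !ltnS ltnW.
have := P (Ordinal s1) (Ordinal s2) isT.
rewrite /= !(tnth_nth x) /= !nth_rcons q1 (ltnW q1) => ab.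
by exists (nth x q 0), (nth x q 1); split => //; apply: mem_nth => //; apply: ltnW.
Qed.

End PathEnds.

Section Cycles.
Variables (V : finType) (near far : rel V).

Lemma hole_like5 a b c d e :
  uniq [:: a; b; c; d; e] ->
  near a b -> near b c -> near c d -> near d e -> near a e ->
  far a c -> far a d -> far b d -> far b e -> far c e ->
  hole_like near far [:: a; b; c; d; e].
Proof.
move=> U ab bc cd de ae ac ad bd be ce; split => //; split => //.
move=> [i Hi] [j Hj] /= ij; rewrite !(tnth_nth a) /=.
by case: i Hi ij => [|[|[|[|[|i]]]]] Hi ij; case: j Hj ij => [|[|[|[|[|j]]]]] Hj ij.
Qed.

Lemma hole_like6 a b c d e f :
  uniq [:: a; b; c; d; e; f] ->
  near a b -> near b c -> near c d -> near d e -> near e f -> near a f ->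
  far a c -> far a d -> far a e -> far b d -> far b e -> far b f ->
  far c e -> far c f -> far d f ->
  hole_like near far [:: a; b; c; d; e; f].
Proof.
move=> U ab bc cd de ef af ac ad ae bd be bf ce cf df; split => //; split => //.
move=> [i Hi] [j Hj] /= ij; rewrite !(tnth_nth a) /=.
by case: i Hi ij => [|[|[|[|[|[|i]]]]]] Hi ij; case: j Hj ij => [|[|[|[|[|[|j]]]]]] Hj ij.
Qed.

End Cycles.

Section SkewPartitions.
Variables (V : finType) (T : trigraph V).
Local Notation adj := (adj T).
Local Notation antiadj := (antiadj T).

Lemma isolated_disconnects (r : rel V) (X : {set V}) z u :
  z \in X -> u \in X -> u != z -> (forall w, w \in X -> ~~ r z w) ->
  ~ (forall a b, a \in X -> b \in X -> connect (rel_in X r) a b).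
Proof.
move=> zX uX uz iso /(_ z u zX uX) /connectP [[|w p] /= zp uE].
  by rewrite uE eqxx in uz.
by case/andP: zp => /and3P [_ wX]; rewrite (negbTE (iso w wX)).
Qed.

(* If A is stable, every skew-partition (A, B) is balanced: a path with
   interior in A has at most one interior vertex, and the ends of an
   antipath of length >= 2 are adjacent. *)
Lemma balanced_of_stable (A : {set V}) :
  (forall a b, a \in A -> b \in A -> ~~ adj a b) -> balanced T A.
Proof.
move=> stA; split=> x y q P xB yB /allP qA long.
  have [short|] := leqP (size q) 1; last first.
    case/(path_like_interior P) => a [b [/qA aA /qA bA]].
    by rewrite (negbTE (stA a b aA bA)).
  by case: (size q) short long => [|[|]].
by move: (path_like_ends P long); rewrite (negbTE (stA x y xB yB)).
Qed.

Lemma balanced_of_strong_clique (A : {set V}) :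
  (forall u v, u \notin A -> v \notin A -> u != v -> ~~ antiadj u v) -> balanced T A.
Proof.
move=> acB; split=> x y q P xB yB /allP qB long.
  have xy := path_like_ends P long; rewrite !inE in xB yB.
  by move: (acB x y xB yB (antiadj_neq xy)); rewrite xy.
have [short|] := leqP (size q) 1; last first.
  case/(path_like_interior P) => a [b [/qB aB /qB bB ab]]; rewrite !inE in aB bB.
  by move: (acB a b aB bB (antiadj_neq ab)); rewrite ab.
by case: (size q) short long => [|[|]].
Qed.

Lemma skew_of_isolated (A : {set V}) z z' u u' :
  z \in A -> z' \in A -> z' != z -> (forall w, w \in A -> ~~ adj z w) ->
  u \notin A -> u' \notin A -> u' != u -> (forall w, w \notin A -> ~~ antiadj u w) ->
  skew_partition T A.
Proof.
move=> zA z'A z'z isoz uA u'A u'u isou; split.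
  exact: (isolated_disconnects zA z'A z'z isoz).
apply: (@isolated_disconnects antiadj _ u u'); rewrite ?inE //.
by move=> w; rewrite inE; apply: isou.
Qed.

Lemma bsp_of_strong_clique (A : {set V}) z z' :
  z \in A -> z' \in A -> z' != z -> (forall w, w \in A -> ~~ adj z w) ->
  (forall u v, u \notin A -> v \notin A -> u != v -> ~~ antiadj u v) ->
  1 < #|~: A| -> balanced_skew_partition T A.
Proof.
move=> zA z'A z'z isoz acB /card_gt1P [u [u' [uB u'B uu']]].
split; last exact: balanced_of_strong_clique.
rewrite !inE in uB u'B; apply: (skew_of_isolated zA z'A z'z isoz uB u'B).
  by rewrite eq_sym.
move=> w wA; have [<-|uw] := eqVneq u w; first by rewrite antiadjxx.
exact: acB.
Qed.

Lemma bsp_of_stable (A : {set V}) a b u u' :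
  a \in A -> b \in A -> b != a -> (forall c d, c \in A -> d \in A -> ~~ adj c d) ->
  u \notin A -> u' \notin A -> u' != u -> (forall w, w \notin A -> ~~ antiadj u w) ->
  balanced_skew_partition T A.
Proof.
move=> aA bA ba stA uA u'A u'u isou; split; last exact: balanced_of_stable.
by apply: (skew_of_isolated aA bA ba _ uA u'A u'u isou) => w; apply: stA.
Qed.

Lemma pair_stable a b : ~~ adj a b ->
  forall c d, c \in [set a; b] -> d \in [set a; b] -> ~~ adj c d.
Proof.
move=> ab c d /set2P cE /set2P dE.
by case: cE dE => -> [] ->; rewrite ?adjxx // adjC.
Qed.

End SkewPartitions.

Section SwitchableComponents.
Variables (V : finType) (T : trigraph V).
Local Notation semiadj := (semiadj T).
Local Notation swcomp := (swcomp T).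
Local Notation swedges := (swedges T).

Lemma component_closed D w w' : swcomp D -> w \in D -> semiadj w w' -> w' \in D.
Proof.
case/andP=> _ /existsP [x0 /eqP ->]; rewrite !inE => x0w ww'.
exact: connect_trans x0w (connect1 ww').
Qed.

Lemma component_partner D w : swcomp D -> w \in D -> exists2 w', w' \in D & semiadj w w'.
Proof.
move=> DD wD; have /andP [D2 /existsP [x0 /eqP DE]] := DD.
have [z zD zw] : exists2 z, z \in D & z != w.
  case/card_gt1P: D2 => z1 [z2 [z1D z2D z12]].
  by have [E|] := eqVneq z1 w; [exists z2; rewrite // -E eq_sym | exists z1].
have wz : connect semiadj w z.
  move: wD zD; rewrite DE !inE => x0w x0z.
  by apply: connect_trans x0z; rewrite (sym_connect_sym (@semiadjC _ T)).
case/connectP: wz => [[_ zE | w' p /= /andP [ww' _] _]]; first by rewrite zE eqxx in zw.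
by exists w'; first exact: component_closed ww'.
Qed.

Lemma swedge_mem D a b : swcomp D -> a \in D -> semiadj a b -> [set a; b] \in swedges D.
Proof.
move=> DD aD ab; rewrite inE; apply/andP; split.
  by apply/subsetP => z /set2P [] ->; last exact: component_closed ab.
by apply/existsP; exists a; apply/existsP; exists b; rewrite eqxx.
Qed.

Lemma light_component D v x y : swcomp D -> #|swedges D| <= 2 -> v \in D ->
  semiadj v x -> semiadj v y -> x != y ->
  D = [set v; x; y] /\ #|swedges D| = 2.
Proof.
move=> DD E2 vD vx vy xy.
have exy : [set v; x] != [set v; y].
  apply: contraNneq xy => E; have : x \in [set v; y] by rewrite -E !inE eqxx orbT.
  by rewrite !inE eq_sym (negbTE (semiadj_neq vx)).
have Edges : swedges D = [set [set v; x]; [set v; y]].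
  apply/esym/eqP; rewrite eqEcard cards2 exy E2 andbT.
  by apply/subsetP => e /set2P [] ->; apply: swedge_mem.
split; last by rewrite Edges cards2 exy.
apply/setP => d; apply/idP/idP; last first.
  rewrite !inE => /orP [/orP [] | ] /eqP -> //.
    exact: component_closed DD vD vx.
  exact: component_closed DD vD vy.
move=> dD; have [d' _ dd'] := component_partner DD dD.
have : [set d; d'] \in swedges D by apply: swedge_mem.
rewrite Edges => /set2P [] E.
  have : d \in [set v; x] by rewrite -E !inE eqxx.
  by rewrite !inE => /orP [] ->; rewrite ?orbT.
have : d \in [set v; y] by rewrite -E !inE eqxx.
by rewrite !inE => /orP [] ->; rewrite ?orbT.
Qed.

Lemma closed_pair_component D a b : swcomp D -> a \in D -> semiadj a b ->
  (forall s t, s \in [set a; b] -> semiadj s t -> t \in [set a; b]) ->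
  D = [set a; b] /\ #|swedges D| = 1.
Proof.
move=> DD aD ab out; have /andP [_ /existsP [x0 /eqP DE]] := DD.
have bD := component_closed DD aD ab.
have closed_ab : closed semiadj [set a; b].
  move=> s t st; apply/idP/idP => H; first exact: out st.
  by apply: out H _; rewrite semiadjC.
have DabE : D = [set a; b].
  have x0ab : x0 \in [set a; b].
    by move: aD; rewrite DE inE => /(closed_connect closed_ab) ->; rewrite !inE eqxx.
  apply/setP => d; rewrite DE inE; apply/idP/idP => [x0d | /set2P [] ->].
  - by rewrite -(closed_connect closed_ab x0d).
  - by move: aD; rewrite DE inE.
  - by move: bD; rewrite DE inE.
split => //; suff -> : swedges D = [set [set a; b]] by rewrite cards1.
apply/eqP; rewrite eqEsubset sub1set swedge_mem // andbT.
apply/subsetP => e; rewrite inE => /andP [eD /existsP [p /existsP [q /andP [/eqP eE pq]]]].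
rewrite inE eqEcard -DabE eD eE cards2 (semiadj_neq pq) DabE cards2.
by case: (a != b).
Qed.

Lemma component_shape D : swcomp D -> #|swedges D| <= 2 ->
  (exists x y, [/\ semiadj x y, D = [set x; y] & #|swedges D| = 1]) \/
  (exists v x y, [/\ semiadj v x, semiadj v y, x != y, D = [set v; x; y]
                   & #|swedges D| = 2]).
Proof.
move=> DD E2; have /andP [D2 _] := DD.
have [a aD] : exists a, a \in D by case/card_gt1P: D2 => a [? [aD _ _]]; exists a.
have [b bD ab] := component_partner DD aD.
pose leaves (st : V * V) :=
  [&& st.1 \in [set a; b], st.2 \notin [set a; b] & semiadj st.1 st.2].
have [[s t] /and3P [/= sab tab st] | stays] := pickP leaves; last first.
  have out s t : s \in [set a; b] -> semiadj s t -> t \in [set a; b].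
    by move=> sab st; apply: contraFT (stays (s, t)) => tab; rewrite /leaves /= sab tab st.
  by left; exists a, b; have [-> ->] := closed_pair_component DD aD ab out.
have a't : a != t by apply: contraNneq tab => <-; rewrite !inE eqxx.
have b't : b != t by apply: contraNneq tab => <-; rewrite !inE eqxx orbT.
right; case/set2P: sab => sE; rewrite sE in st.
  by exists a, b, t; have [-> ->] := light_component DD E2 aD ab st b't.
rewrite semiadjC in ab; exists b, a, t.
by have [-> ->] := light_component DD E2 bD ab st a't.
Qed.

End SwitchableComponents.

Section ComponentOfF.
Variables (V : finType) (T : trigraph V).
Hypothesis TF : inF T.
Local Notation semiadj := (semiadj T).
Local Notation santiadj := (santiadj T).
Local Notation swD := (swD T).
Local Notation nbhd := (nbhd T).

Lemma swD_component d : d \in swD -> swcomp T swD.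
Proof.
case: TF => _ [uniq _]; rewrite inE => /existsP [D0 /andP [D0c _]].
suff -> : swD = D0 by [].
apply/setP => w; rewrite inE; apply/existsP/idP => [[D /andP [Dc]] | wD0].
  by rewrite (uniq _ _ Dc D0c).
by exists D0; rewrite D0c.
Qed.

Lemma swD_small_or_light d : d \in swD ->
  (exists x y, [/\ semiadj x y, swD = [set x; y] & nbhd x :&: nbhd y = set0]) \/
  (exists v x y, [/\ semiadj v x, semiadj v y, x != y, swD = [set v; x; y] &
     [/\ forall w, w \notin [set v; x; y] -> santiadj v w, santiadj x y
       & nbhd x :&: nbhd y = [set v]]]).
Proof.
move=> /swD_component Dc; case: TF => _ [_ [E2 [small light]]].
case: (component_shape Dc (E2 _ Dc)) => [[x [y [xy DE E1]]] | [v [x [y [vx vy xy DE E2']]]]].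
  by left; exists x, y; split => //; apply: (small _ _ _ Dc E1 _ xy); rewrite DE !inE eqxx.
have vD : v \in swD by rewrite DE !inE eqxx.
by have [? [? ?]] := light _ _ _ _ Dc E2' vD vx vy xy; right; exists v, x, y.
Qed.

Lemma swD_pair_small x y : x != y -> swD = [set x; y] ->
  semiadj x y /\ nbhd x :&: nbhd y = set0.
Proof.
move=> xy DE; have xD : x \in swD by rewrite DE !inE eqxx.
case: (swD_small_or_light xD) => [[a [b [ab DE2 disj]]] | [v [x' [y' [vx vy x'y' DE2 _]]]]].
  have abE : [set a; b] = [set x; y] by rewrite -DE2 DE.
  have aE : a \in [set x; y] by rewrite -abE !inE eqxx.
  have bE : b \in [set x; y] by rewrite -abE !inE eqxx orbT.
  case/set2P: aE => aE; case/set2P: bE => bE; subst a b.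
  - by move: (semiadj_neq ab); rewrite eqxx.
  - by [].
  - by rewrite semiadjC setIC.
  - by move: (semiadj_neq ab); rewrite eqxx.
have y'out : y' \notin [set v; x'].
  by rewrite !inE negb_or eq_sym (semiadj_neq vy) eq_sym x'y'.
suff : #|[set x; y]| != #|[set v; x'; y']| by rewrite -DE DE2 eqxx.
by rewrite cards2 xy [_ :|: [set y']]setUC cardsU1 y'out cards2 (semiadj_neq vx).
Qed.

End ComponentOfF.

Section ForbiddenCycles.
Variables (V : finType) (T : trigraph V).
Local Notation adj := (adj T).
Local Notation antiadj := (antiadj T).

Lemma no_hole5 a b c d e : Berge T ->
  adj a b -> adj b c -> adj c d -> adj d e -> adj a e ->
  antiadj a c -> antiadj a d -> antiadj b d -> antiadj b e -> antiadj c e -> False.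
Proof.
move=> [noOddHole _] ab bc cd de ae ac ad bd be ce.
suff /noOddHole : hole T [:: a; b; c; d; e] by [].
apply: hole_like5 => //; rewrite /= !inE !negb_or.
by rewrite (adj_neq ab) (adj_neq bc) (adj_neq cd) (adj_neq de) (adj_neq ae)
  (antiadj_neq ac) (antiadj_neq ad) (antiadj_neq bd) (antiadj_neq be) (antiadj_neq ce).
Qed.

Lemma no_antihole6 a b c d e f :
  ~ (exists h : seq V, antihole T h /\ size h = 6) ->
  antiadj a b -> antiadj b c -> antiadj c d -> antiadj d e -> antiadj e f ->
  antiadj a f -> adj a c -> adj a d -> adj a e -> adj b d -> adj b e ->
  adj b f -> adj c e -> adj c f -> adj d f -> False.
Proof.
move=> noC6 ab bc cd de ef af ac ad ae bd be bf ce cf df.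
apply: noC6; exists [:: a; b; c; d; e; f]; split => //.
apply: hole_like6 => //; rewrite /= !inE !negb_or.
by rewrite (antiadj_neq ab) (antiadj_neq bc) (antiadj_neq cd) (antiadj_neq de)
  (antiadj_neq ef) (antiadj_neq af) (adj_neq ac) (adj_neq ad) (adj_neq ae)
  (adj_neq bd) (adj_neq be) (adj_neq bf) (adj_neq ce) (adj_neq cf) (adj_neq df).
Qed.

End ForbiddenCycles.

Section OuterClique.
Variables (V : finType) (T : trigraph V).
Local Notation adj := (adj T).
Local Notation antiadj := (antiadj T).
Local Notation swD := (swD T).
Hypothesis noBSP : ~ exists A, balanced_skew_partition T A.
Hypothesis clique_out : forall u w, u \notin swD -> w \notin swD -> u != w -> adj u w.

Lemma outer_nantiadj u w : u \notin swD -> w \notin swD -> u != w -> ~~ antiadj u w.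
Proof. by move=> uD wD uw; apply: (nantiadj_off_swD uD) => _; apply: clique_out. Qed.

(* If V \ D is a clique, no vertex outside D can be anticomplete to D:
   otherwise (z |: D, rest) is a balanced skew-partition. *)
Lemma isolated_outer_vertex z d : d \in swD -> #|swD| + 3 <= #|V| ->
  z \notin swD -> (forall w, w \in swD -> ~~ adj z w) -> False.
Proof.
move=> dD big zD iso; apply: noBSP; exists (z |: swD).
apply: (@bsp_of_strong_clique _ _ _ z d); rewrite ?setU11 ?setU1r //.
- by rewrite eq_sym (outer_neq zD dD).
- by move=> w /setU1P [->|]; [rewrite adjxx | apply: iso].
- move=> u w; rewrite !in_setU1 !negb_or => /andP [_ uD] /andP [_ wD].
  exact: outer_nantiadj.
- by apply: (compl_card_gt1 (n := #|swD|.+1)); [rewrite cardsU1 zD | lia].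
Qed.

Lemma outer_cover_of_clique x y : x \in swD -> #|swD| + 3 <= #|V| ->
  (forall z w, z \notin swD -> w \in swD -> w != x -> w != y -> ~~ adj z w) ->
  forall z, z \notin swD -> adj x z || adj y z.
Proof.
move=> xD big others z zD; apply/negPn/negP; rewrite negb_or => /andP [xz yz].
apply: (isolated_outer_vertex xD big zD) => w wD.
have [->|wx] := eqVneq w x; first by rewrite adjC.
have [->|wy] := eqVneq w y; first by rewrite adjC.
exact: others.
Qed.

End OuterClique.

Section SmallComponent.
Variables (V : finType) (T : trigraph V) (x y : V).
Local Notation adj := (adj T).
Local Notation swD := (swD T).
Hypothesis noBSP : ~ exists A, balanced_skew_partition T A.
Hypothesis swD_xy : swD = [set x; y].
Hypothesis x_neq_y : x != y.
Hypothesis disjoint_xy : nbhd T x :&: nbhd T y = set0.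

Lemma x_in_swD : x \in swD. Proof. by rewrite swD_xy !inE eqxx. Qed.
Lemma y_in_swD : y \in swD. Proof. by rewrite swD_xy !inE eqxx orbT. Qed.

Lemma no_common_nbr r : adj x r -> adj y r -> False.
Proof.
move=> xr yr; have : r \in nbhd T x :&: nbhd T y by rewrite !inE xr yr.
by rewrite disjoint_xy inE.
Qed.

Hypothesis clique_out : forall u w, u \notin swD -> w \notin swD -> u != w -> adj u w.

(* If V \ D is a clique and y has two outer neighbours w, w', then
   ({x, w}, rest) is a balanced skew-partition: x and w are non-adjacent,
   and w' is strongly adjacent to everything else. *)
Lemma two_outer_nbrs : 1 < #|outer_nbhd T y| -> False.
Proof.
case/card_gt1P => w [w' []]; rewrite !in_outer_nbhd => /andP [wD yw] /andP [w'D yw'] ww'.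
apply: noBSP; exists [set x; w]; apply: (@bsp_of_stable _ _ _ x w w' y).
- by rewrite !inE eqxx.
- by rewrite !inE eqxx orbT.
- exact: outer_neq wD x_in_swD.
- by apply: pair_stable; apply/negP => xw; apply: no_common_nbr xw yw.
- by rewrite !inE negb_or (outer_neq w'D x_in_swD) eq_sym.
- by rewrite !inE negb_or eq_sym x_neq_y eq_sym (outer_neq wD y_in_swD).
- by rewrite eq_sym (outer_neq w'D y_in_swD).
move=> z; rewrite !inE negb_or => /andP [zx zw]; apply: (nantiadj_off_swD w'D) => w'z.
have [->|zy] := eqVneq z y; first by rewrite adjC.
by apply: clique_out; rewrite // swD_xy !inE negb_or zx.
Qed.

End SmallComponent.

(* Case "D small and V \ D a clique": V \ D is covered by the outer
   neighbourhoods of x and y, one of which has two vertices. *)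
Lemma small_clique_contra (V : finType) (T : trigraph V) x y :
  ~ (exists A, balanced_skew_partition T A) -> 5 < #|V| ->
  swD T = [set x; y] -> semiadj T x y -> nbhd T x :&: nbhd T y = set0 ->
  (forall u w, u \notin swD T -> w \notin swD T -> u != w -> adj T u w) -> False.
Proof.
move=> noBSP big DE xy disj clique_out; have x_y := semiadj_neq xy.
have cardD : #|swD T| = 2 by rewrite DE cards2 x_y.
have cover := outer_cover_of_clique noBSP clique_out (x_in_swD DE).
have sides : #|~: swD T| <= #|outer_nbhd T x| + #|outer_nbhd T y|.
  apply/outer_cover_card/cover; first by rewrite cardD ltnW.
  by move=> z w _ wD /negbTE wx /negbTE wy; move: wD; rewrite DE !inE wx wy.
have [big_y|small_y] := ltnP 1 #|outer_nbhd T y|.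
  exact: two_outer_nbrs noBSP DE x_y disj clique_out big_y.
move: (cardsC (swD T)); rewrite cardD => compl_card.
apply: (two_outer_nbrs (x := y) noBSP _ _ _ clique_out).
- by rewrite DE setUC.
- by rewrite eq_sym.
- by rewrite setIC.
- lia.
Qed.

Section LightComponent.
Variables (V : finType) (T : trigraph V) (v x y : V).
Local Notation adj := (adj T).
Local Notation swD := (swD T).
Hypothesis noBSP : ~ exists A, balanced_skew_partition T A.
Hypothesis big : 5 < #|V|.
Hypothesis swD_vxy : swD = [set v; x; y].
Hypothesis v_anti : forall w, w \notin swD -> santiadj T v w.
Hypothesis clique_out : forall u w, u \notin swD -> w \notin swD -> u != w -> adj u w.

(* If x has no neighbour outside D while y is complete to V \ D, then for
   any outer vertex c, ({v, x, c}, rest) is a balanced skew-partition: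
   c is isolated in {v, x, c}, and the rest is y plus a strong clique. *)
Lemma light_one_sided : (forall r, r \notin swD -> ~~ adj x r) ->
  (forall r, r \notin swD -> adj y r) -> False.
Proof.
move=> x_out y_out.
have cardD : #|swD| <= 3 by rewrite swD_vxy card_set3.
have [c cD] : exists c, c \notin swD.
  have /card_gt1P [c [_ [cD _ _]]] := compl_card_gt1 cardD (ltnW big).
  by exists c; rewrite inE in cD.
have [vD xD] : v \in swD /\ x \in swD by rewrite swD_vxy !inE !eqxx /= orbT.
have outer r : r \notin [set v; x; c] -> r != y -> r \notin swD.
  by rewrite swD_vxy !inE !negb_or => /andP [/andP [-> ->] _] ->.
apply: noBSP; exists [set v; x; c]; apply: (@bsp_of_strong_clique _ _ _ c v).
- by rewrite !inE eqxx orbT.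
- by rewrite !inE eqxx.
- by rewrite eq_sym (outer_neq cD vD).
- move=> w; rewrite !inE => /orP [/orP [] | ] /eqP ->; last by rewrite adjxx.
    by rewrite adjC; apply: santiadj_nadj; apply: v_anti.
  by rewrite adjC; apply: x_out.
- move=> u w uA wA uw; have [uE|uy] := eqVneq u y.
    have wD : w \notin swD by apply: (outer w wA); rewrite -uE eq_sym.
    by rewrite antiadjC; apply: (nantiadj_off_swD wD) => _; rewrite adjC uE y_out.
  apply: (nantiadj_off_swD (outer _ uA uy)) => _.
  have [->|wy] := eqVneq w y; first by rewrite adjC y_out // outer.
  exact: clique_out (outer _ uA uy) (outer _ wA wy) uw.
- exact: compl_card_gt1 (card_set3 _ _ _) (ltnW big).
Qed.

Hypothesis berge : Berge T.
Hypotheses (v_x : semiadj T v x) (v_y : semiadj T v y).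
Hypothesis x_anti_y : santiadj T x y.
Hypothesis common_xy : nbhd T x :&: nbhd T y = [set v].

(* Outer neighbours x1 of x and y1 of y close the hole v - x - x1 - y1 - y
   of length five. *)
Lemma light_hole x1 y1 : x1 \in outer_nbhd T x -> y1 \in outer_nbhd T y -> False.
Proof.
rewrite !in_outer_nbhd => /andP [x1D xx1] /andP [y1D yy1].
have [vD xD yD] : [/\ v \in swD, x \in swD & y \in swD] by rewrite swD_vxy !inE !eqxx !orbT.
have only_v r : adj x r -> adj y r -> r \in swD.
  move=> xr yr; have : r \in nbhd T x :&: nbhd T y by rewrite !inE xr yr.
  by rewrite common_xy inE => /eqP ->.
have x1y : ~~ adj y x1 by apply: contraNN x1D => /(only_v _ xx1).
have y1x : ~~ adj x y1 by apply: contraNN y1D => /only_v; apply.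
have x1y1 : x1 != y1 by apply: contraNneq y1x => <-.
apply: (@no_hole5 _ T v x x1 y1 y berge).
- exact: semiadj_adj.
- exact: xx1.
- exact: clique_out.
- by rewrite adjC.
- exact: semiadj_adj.
- exact/santiadj_antiadj/v_anti.
- exact/santiadj_antiadj/v_anti.
- by apply: nadj_antiadj y1x; rewrite eq_sym (outer_neq y1D xD).
- exact: santiadj_antiadj.
- by apply: nadj_antiadj (outer_neq x1D yD) _; rewrite adjC.
Qed.

End LightComponent.

(* Case "D light and V \ D a clique": V \ D is covered by the outer
   neighbourhoods of x and y; if both are non-empty there is a 5-hole. *)
Lemma light_clique_contra (V : finType) (T : trigraph V) v x y :
  Berge T -> ~ (exists A, balanced_skew_partition T A) -> 5 < #|V| ->
  swD T = [set v; x; y] -> semiadj T v x -> semiadj T v y ->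
  (forall w, w \notin [set v; x; y] -> santiadj T v w) -> santiadj T x y ->
  nbhd T x :&: nbhd T y = [set v] ->
  (forall u w, u \notin swD T -> w \notin swD T -> u != w -> adj T u w) -> False.
Proof.
move=> berge noBSP big DE vx vy v_anti sxy common clique_out; rewrite -DE in v_anti.
have DE_swap : swD T = [set v; y; x] by rewrite DE setUAC.
have cover : forall r, r \notin swD T -> adj T x r || adj T y r.
  apply: (outer_cover_of_clique noBSP clique_out); first by rewrite DE !inE eqxx orbT.
    by rewrite DE; move: (card_set3 v x y); lia.
  move=> z w zD wD /negbTE wx /negbTE wy.
  move: wD; rewrite DE !inE wx wy !orbF => /eqP ->.
  by rewrite adjC; apply/santiadj_nadj/v_anti.
have only r c : r \notin swD T -> r \notin outer_nbhd T c -> ~~ adj T c r.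
  by rewrite in_outer_nbhd => ->.
have [x1 x1X | x_none] := pickP (fun r => r \in outer_nbhd T x); last first.
  apply: (light_one_sided noBSP big DE v_anti clique_out) => r rD.
    exact: only rD (negbT (x_none r)).
  by move: (cover r rD); rewrite (negbTE (only _ _ rD (negbT (x_none r)))).
have [y1 y1Y | y_none] := pickP (fun r => r \in outer_nbhd T y); last first.
  apply: (light_one_sided noBSP big DE_swap v_anti clique_out) => r rD.
    exact: only rD (negbT (y_none r)).
  by move: (cover r rD); rewrite (negbTE (only _ _ rD (negbT (y_none r)))) orbF.
exact: (light_hole DE v_anti clique_out berge vx vy sxy common x1X y1Y).
Qed.

Section OneSideAnticomplete.
Variables (V : finType) (T : trigraph V) (x y : V).
Local Notation adj := (adj T).
Local Notation swD := (swD T).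
Local Notation X := (outer_nbhd T x).
Local Notation Y := (outer_nbhd T y).
Hypothesis noBSP : ~ exists A, balanced_skew_partition T A.
Hypothesis swD_xy : swD = [set x; y].
Hypothesis x_neq_y : x != y.
Hypothesis disjoint_xy : nbhd T x :&: nbhd T y = set0.
Hypothesis cover : forall r, r \notin swD -> adj x r || adj y r.
Hypothesis clique_X : forall p q, p \in X -> q \in X -> p != q -> adj p q.

(* With V \ D = X u Y and X a clique, a vertex a of X anticomplete to Y
   yields the balanced skew-partition (a + y + Y, x + X - a), provided
   X has another vertex. *)
Lemma anticomplete_mem_outer_nbhd a : a \in X -> (forall q, q \in Y -> ~~ adj a q) ->
  1 < #|X| -> False.
Proof.
move=> aX aY /card_gt1P [p [p' [pX p'X pp']]].
have [a' a'X a'a] : exists2 a', a' \in X & a' != a.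
  by have [E|] := eqVneq p a; [exists p'; rewrite // -E eq_sym | exists p].
have xD := x_in_swD swD_xy; have yD := y_in_swD swD_xy.
have outerX r (rX : r \in X) : r \notin swD := (mem_outer_nbhd rX).1.
have notY r : r \in X -> r \notin Y.
  rewrite !in_outer_nbhd => /andP [rD xr]; rewrite rD /=.
  by apply/negP => yr; apply: (no_common_nbr disjoint_xy xr yr).
pose A := a |: (y |: Y).
have inB r : r \notin A -> r = x \/ r \in X.
  rewrite !in_setU1 !negb_or in_outer_nbhd => /and3P [_ ry rY].
  have [rD|rD] := boolP (r \in swD).
    by left; move: rD ry; rewrite swD_xy => /set2P [|->]; rewrite ?eqxx.
  right; rewrite in_outer_nbhd rD; move: (cover rD) rY; rewrite rD /=.
  by case: (adj y r); rewrite ?orbF.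
have adjX r (rX : r \in X) : adj x r := (mem_outer_nbhd rX).2.
apply: noBSP; exists A; apply: (@bsp_of_strong_clique _ _ _ a y).
- exact: setU11.
- by rewrite !in_setU1 eqxx orbT.
- by rewrite eq_sym (outer_neq (outerX _ aX) yD).
- move=> w /setU1P [->|/setU1P [->|/aY //]]; first by rewrite adjxx.
  by apply/negP => ay; apply: (no_common_nbr disjoint_xy (adjX _ aX)); rewrite adjC.
- move=> u w /inB [->|uX] /inB [->|wX] uw; first by rewrite eqxx in uw.
  + rewrite antiadjC; apply: (nantiadj_off_swD (outerX _ wX)) => _.
    by rewrite adjC adjX.
  + by apply: (nantiadj_off_swD (outerX _ uX)) => _; rewrite adjC adjX.
  + by apply: (nantiadj_off_swD (outerX _ uX)) => _; apply: clique_X.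
apply/card_gt1P; exists x, a'; rewrite !in_setC !in_setU1 !negb_or (notY _ a'X) a'a.
rewrite eq_sym (outer_neq (outerX _ aX) xD) x_neq_y in_outer_nbhd xD.
by rewrite (outer_neq (outerX _ a'X) yD) eq_sym (outer_neq (outerX _ a'X) xD).
Qed.

End OneSideAnticomplete.

Section StrongPair.
Variables (V : finType) (T : trigraph V) (x y : V).
Local Notation adj := (adj T).
Local Notation swD := (swD T).
Local Notation X := (outer_nbhd T x).
Local Notation Y := (outer_nbhd T y).
Hypothesis noBSP : ~ exists A, balanced_skew_partition T A.
Hypothesis big : 5 < #|V|.
Hypothesis swD_xy : swD = [set x; y].
Hypothesis semi_xy : semiadj T x y.
Hypothesis disjoint_xy : nbhd T x :&: nbhd T y = set0.
Hypothesis berge : Berge T.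
Hypothesis noC6 : ~ exists h : seq V, antihole T h /\ size h = 6.
Hypothesis nonnbrs_x : clique T (~: (swD :|: nbhd T x)).
Hypothesis nonnbrs_y : clique T (~: (swD :|: nbhd T y)).
Hypothesis strong_pair : exists u w, santiadj T u w /\ u \notin swD /\ w \notin swD.

Let x_y : x != y := semiadj_neq semi_xy.
Let xD : x \in swD := x_in_swD swD_xy.
Let yD : y \in swD := y_in_swD swD_xy.

Lemma outer_nonnbrs_adj c p q : c \in [set x; y] -> p \notin swD -> q \notin swD ->
  ~~ adj c p -> ~~ adj c q -> p != q -> adj p q.
Proof.
have mem p' c' : p' \notin swD -> ~~ adj c' p' -> p' \in ~: (swD :|: nbhd T c').
  by move=> pD cp; rewrite in_setC in_setU negb_or pD inE.
move=> /set2P [] -> pD qD cp cq.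
  exact: nonnbrs_x (mem _ _ pD cp) (mem _ _ qD cq).
exact: nonnbrs_y (mem _ _ pD cp) (mem _ _ qD cq).
Qed.

Lemma X_nadj_y r : r \in X -> ~~ adj y r.
Proof.
by case/mem_outer_nbhd => _ xr; apply/negP => yr; apply: (no_common_nbr disjoint_xy xr yr).
Qed.

Lemma Y_nadj_x r : r \in Y -> ~~ adj x r.
Proof.
by case/mem_outer_nbhd => _ yr; apply/negP => xr; apply: (no_common_nbr disjoint_xy xr yr).
Qed.

Lemma X_clique p q : p \in X -> q \in X -> p != q -> adj p q.
Proof.
move=> pX qX; have [pD _] := mem_outer_nbhd pX; have [qD _] := mem_outer_nbhd qX.
by apply: (outer_nonnbrs_adj (c := y)); rewrite ?X_nadj_y // !inE eqxx orbT.
Qed.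

Lemma Y_clique p q : p \in Y -> q \in Y -> p != q -> adj p q.
Proof.
move=> pY qY; have [pD _] := mem_outer_nbhd pY; have [qD _] := mem_outer_nbhd qY.
by apply: (outer_nonnbrs_adj (c := x)); rewrite ?Y_nadj_x // !inE eqxx.
Qed.

Lemma cross_pair : exists x1 y1, [/\ x1 \in X, y1 \in Y & ~~ adj x1 y1].
Proof.
case: strong_pair => u [w [uw [uD wD]]]; have u_w := antiadj_neq (santiadj_antiadj uw).
have nuw := santiadj_nadj uw; have xyc : x \in [set x; y] /\ y \in [set x; y].
  by rewrite !inE !eqxx orbT.
case xu : (adj x u).
  have yw : adj y w.
    apply: contraNT nuw => yw; apply: (outer_nonnbrs_adj xyc.2) => //.
    by apply/negP => yu; apply: (no_common_nbr disjoint_xy xu yu).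
  by exists u, w; rewrite !in_outer_nbhd uD wD xu yw.
have xw : adj x w by apply: contraNT nuw => xw; apply: (outer_nonnbrs_adj xyc.1); rewrite ?xu.
have yu : adj y u.
  apply: contraNT nuw => yu; apply: (outer_nonnbrs_adj xyc.2) => //.
  by apply/negP => yw; apply: (no_common_nbr disjoint_xy xw yw).
by exists w, u; rewrite !in_outer_nbhd uD wD xw yu adjC.
Qed.

(* No outer vertex z misses both x and y: x - x1 - z - y1 - y would be a
   hole of length five. *)
Lemma outer_cover r : r \notin swD -> adj x r || adj y r.
Proof.
move=> zD; apply/negPn/negP; rewrite negb_or => /andP [xz yz].
have [x1 [y1 [x1X y1Y x1y1]]] := cross_pair.
have [x1D xx1] := mem_outer_nbhd x1X; have [y1D yy1] := mem_outer_nbhd y1Y.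
have [x1y yy1'] := (X_nadj_y x1X, Y_nadj_x y1Y).
have xyc : x \in [set x; y] /\ y \in [set x; y] by rewrite !inE !eqxx orbT.
apply: (@no_hole5 _ T x x1 r y1 y berge).
- exact: xx1.
- by apply: (outer_nonnbrs_adj xyc.2) => //; apply: contraNneq xz => <-.
- by apply: (outer_nonnbrs_adj xyc.1) => //; apply: contraNneq yz => ->.
- by rewrite adjC.
- exact: semiadj_adj.
- by apply: nadj_antiadj xz; rewrite eq_sym (outer_neq zD xD).
- by apply: nadj_antiadj yy1'; rewrite eq_sym (outer_neq y1D xD).
- by apply: nadj_antiadj x1y1; apply: contraNneq x1y => ->; rewrite yy1.
- by apply: nadj_antiadj (outer_neq x1D yD) _; rewrite adjC.
- by apply: nadj_antiadj (outer_neq zD yD) _; rewrite adjC.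
Qed.

(* Two crossing non-edges between X and Y give the antihole
   x, b1, a1, y, a2, b2 of length six. *)
Lemma no_crossed_pairs a1 a2 b1 b2 : a1 \in X -> a2 \in X -> b1 \in Y -> b2 \in Y ->
  ~~ adj a1 b1 -> ~~ adj a2 b2 -> adj a1 b2 -> adj a2 b1 -> False.
Proof.
move=> a1X a2X b1Y b2Y a1b1 a2b2 a1b2 a2b1.
have [a1D xa1] := mem_outer_nbhd a1X; have [a2D xa2] := mem_outer_nbhd a2X.
have [b1D yb1] := mem_outer_nbhd b1Y; have [b2D yb2] := mem_outer_nbhd b2Y.
have b1b2 : b1 != b2 by apply: contraNneq a1b1 => ->.
have a1a2 : a1 != a2 by apply: contraNneq a1b1 => ->.
apply: (@no_antihole6 _ T x b1 a1 y a2 b2 noC6).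
- by apply: nadj_antiadj (Y_nadj_x b1Y); rewrite eq_sym (outer_neq b1D xD).
- apply: nadj_antiadj; last by rewrite adjC.
  by apply: contraNneq (Y_nadj_x b1Y) => ->.
- by apply: nadj_antiadj (outer_neq a1D yD) _; rewrite adjC X_nadj_y.
- by apply: nadj_antiadj (X_nadj_y a2X); rewrite eq_sym (outer_neq a2D yD).
- by apply: nadj_antiadj a2b2; apply: contraNneq (X_nadj_y a2X) => ->.
- by apply: nadj_antiadj (Y_nadj_x b2Y); rewrite eq_sym (outer_neq b2D xD).
- exact: xa1.
- exact: semiadj_adj.
- exact: xa2.
- by rewrite adjC.
- by rewrite adjC.
- exact: Y_clique.
- exact: X_clique.
- exact: a1b2.
- exact: yb2.
Qed.

(* A vertex y' of Y complete to X is strongly adjacent to everything but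
   x and y1, so ({x, y1}, rest) is a balanced skew-partition. *)
Lemma complete_in_Y y' : y' \in Y -> (forall p, p \in X -> adj p y') -> False.
Proof.
move=> y'Y y'X; have [y'D yy'] := mem_outer_nbhd y'Y.
have [x1 [y1 [x1X y1Y x1y1]]] := cross_pair; have [y1D _] := mem_outer_nbhd y1Y.
have y1y' : y1 != y' by apply: contraNneq x1y1 => ->; apply: y'X.
apply: noBSP; exists [set x; y1]; apply: (@bsp_of_stable _ _ _ x y1 y' y).
- by rewrite !inE eqxx.
- by rewrite !inE eqxx orbT.
- exact: outer_neq y1D xD.
- exact/pair_stable/Y_nadj_x.
- by rewrite !inE negb_or (outer_neq y'D xD) eq_sym.
- by rewrite !inE negb_or eq_sym x_y eq_sym (outer_neq y1D yD).
- by rewrite eq_sym (outer_neq y'D yD).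
move=> w; rewrite !inE negb_or => /andP [wx wy1].
apply: (nantiadj_off_swD y'D) => y'w; have [->|wy] := eqVneq w y; first by rewrite adjC.
have wD : w \notin swD by rewrite swD_xy !inE negb_or wx.
case/orP: (outer_cover wD) => [xw | yw]; first by rewrite adjC y'X // in_outer_nbhd wD.
by apply: Y_clique; rewrite // in_outer_nbhd wD.
Qed.

(* The non-neighbourhoods in Y of vertices of X are nested (no crossed
   pairs); an edge a - y' missing at x' makes the inclusion proper. *)
Lemma nonnbrs_proper a x' y' : a \in X -> x' \in X -> y' \in Y ->
  adj a y' -> ~~ adj x' y' ->
  nonnbrs_in T Y a \proper nonnbrs_in T Y x'.
Proof.
move=> aX x'X y'Y ay' x'y'; apply/properP; split.
  apply/subsetP => q; rewrite !in_nonnbrs_in => /andP [qY aq]; rewrite qY /=.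
  by apply/negP => x'q; apply: (no_crossed_pairs aX x'X qY y'Y).
by exists y'; rewrite !in_nonnbrs_in y'Y /= ?ay'.
Qed.

Lemma strong_pair_contra : False.
Proof.
have [x1 [y1 [x1X y1Y x1y1]]] := cross_pair.
have sides : 3 < #|X| + #|Y|.
  have := outer_cover_card outer_cover; move: (cardsC swD); rewrite swD_xy cards2 x_y.
  lia.
have [smallX | bigX] := leqP #|X| 1.
  apply: (anticomplete_mem_outer_nbhd (x := y) (y := x) noBSP _ _ _ _ Y_clique y1Y).
  - by rewrite swD_xy setUC.
  - by rewrite eq_sym.
  - by rewrite setIC.
  - by move=> r /outer_cover; rewrite orbC.
  - by move=> q qX; rewrite adjC (card_le1_eqP smallX x1 q x1X qX).
  - lia.
pose F a := #|nonnbrs_in T Y a|.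
have [a aX amax] := @arg_maxnP _ x1 (fun a => a \in X) F x1X.
have [y' /andP [y'Y ay'] | aY] := pickP (fun q => (q \in Y) && adj a q); last first.
  apply: (anticomplete_mem_outer_nbhd noBSP swD_xy x_y disjoint_xy outer_cover X_clique aX) => //.
  by move=> q qY; move: (aY q); rewrite /= qY /= => ->.
have [x' /andP [x'X x'y'] | y'X] := pickP (fun p => (p \in X) && ~~ adj p y'); last first.
  by apply: (complete_in_Y y'Y) => p pX; move: (y'X p); rewrite /= pX /= => /negbFE.
have bigger := proper_card (nonnbrs_proper aX x'X y'Y ay' x'y').
by have := leq_ltn_trans (amax x' x'X) bigger; rewrite ltnn.
Qed.

End StrongPair.

Lemma unfavorable_pair (V : finType) (T : trigraph V) :
  ~ favorable T -> 5 <= #|V| ->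
  (exists u w, santiadj T u w /\ u \notin swD T /\ w \notin swD T) ->
  exists x y, [/\ x != y, swD T = [set x; y],
    clique T (~: (swD T :|: nbhd T x)) & clique T (~: (swD T :|: nbhd T y))].
Proof.
move=> unfav big pair; apply: NNPP => none; apply: unfav; split=> //; split=> // x y x_y DE.
have [clx|] := classic (clique T (~: (swD T :|: nbhd T x))); last by left.
have [cly|] := classic (clique T (~: (swD T :|: nbhd T y))); last by right.
by case: none; exists x, y.
Qed.

Theorem theorem3p3 (V : finType) (T : trigraph V) :
  inF T ->
  ~ (exists A : {set V}, balanced_skew_partition T A) ->
  ~ (exists h : seq V, antihole T h /\ size h = 6) ->
  ~ favorable T ->
  complete T \/ #|V| <= 5.
Proof.
move=> TF noBSP noC6 unfav; have berge := TF.1.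
have [small|big] := leqP #|V| 5; first by right.
have [pair|no_pair] := classic
  (exists u w, santiadj T u w /\ u \notin swD T /\ w \notin swD T).
  have [x [y [x_y DE clx cly]]] := unfavorable_pair unfav (ltnW big) pair.
  have [sxy disj] := swD_pair_small TF x_y DE.
  by case: (strong_pair_contra noBSP big DE sxy disj berge noC6 clx cly pair).
have clique_out u w : u \notin swD T -> w \notin swD T -> u != w -> adj T u w.
  move=> uD wD uw; apply/negPn/negP => nuw.
  by apply: no_pair; exists u, w; split => //; apply: nadj_santiadj.
have [d dD|noD] := pickP (fun d => d \in swD T); last first.
  by left => u w _ _; apply: clique_out; rewrite /= noD.
case: (swD_small_or_light TF dD) =>
  [[x [y [xy DE disj]]] | [v [x [y [vx vy _ DE [vanti sxy nxy]]]]]].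
  by case: (small_clique_contra noBSP big DE xy disj clique_out).
by case: (light_clique_contra berge noBSP big DE vx vy vanti sxy nxy clique_out).
Qed.
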